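(* Let $k\in\mathbb{Z}$ and $\imath\in\mathbb{Z}_{>1}$. The rational polygon $\mathrm{conv}((0,0),(k,\imath),(k+1/3,\imath))$ is canonical if and only if either $k+1$ is a multiple of $\imath$, or $\imath$ is odd and $k\equiv\frac{\imath-1}{2}\bmod\imath$.
   Context: For rationals $a<b$ and $\imath\in\mathbb{Z}_{>1}$, the polygon $\mathrm{conv}((0,0),(a,\imath),(b,\imath))$ is called canonical if every lattice point $p\neq(0,0)$ in it satisfies $p_2=\imath$. *)

From HB Require Import structures.
From mathcomp Require Import all_boot all_order all_algebra.
Set Implicit Arguments. Unset Strict Implicit. Unset Printing Implicit Defensive.
Import Order.TTheory GRing.Theory Num.Theory.
Local Open Scope ring_scope.

Definition in_conv3 (u v w p : rat * rat) : Prop :=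
  exists l1 l2 l3 : rat,
    [/\ 0 <= l1, 0 <= l2, 0 <= l3 & l1 + l2 + l3 = 1] /\
    p.1 = l1 * u.1 + l2 * v.1 + l3 * w.1 /\
    p.2 = l1 * u.2 + l2 * v.2 + l3 * w.2.

Definition canonical_tri (a b : rat) (i : int) : Prop :=
  forall x y : int,
    in_conv3 (0, 0) (a, i%:~R) (b, i%:~R) (x%:~R, y%:~R) ->
    (x, y) <> (0%R, 0%R) -> y = i.

From HB Require Import structures.
From mathcomp Require Import all_boot all_order all_algebra.
From mathcomp Require Import zify ring lra.
Import Order.TTheory GRing.Theory Num.Theory.
Set Implicit Arguments. Unset Strict Implicit. Unset Printing Implicit Defensive.
Local Open Scope ring_scope.

(* A lattice point (x, y) with 0 < y < i lies in the triangle iff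
   0 <= 3 (x i - y k) <= y.  If i divides m k + 1 for m = 1 or 2, then
   y - m (x i - y k) is a multiple of i strictly between 0 and i, so there is
   no such point.  Otherwise either gcd(k, i) > 1, and x i = y k has a solution
   with 0 < y < i, or k is invertible mod i and y = -k^-1 mod i is at least 3
   and solves x i - y k = 1.  The residue condition of the statement is just
   i | 2 k + 1. *)

Lemma in_conv3_triangleP (a b h x y : rat) : 0 < h -> a < b ->
  in_conv3 (0, 0) (a, h) (b, h) (x, y) <->
  [/\ 0 <= y, y <= h, y * a <= x * h & x * h <= y * b].
Proof.
move=> h_gt0 ab; have hba_gt0 : 0 < h * (b - a) by rewrite mulr_gt0 // subr_gt0.
split.
  case=> l1 [l2 [l3 [[l1_ge0 l2_ge0 l3_ge0 l_sum] /= [-> ->]]]].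
  have := mulr_ge0 l2_ge0 (ltW hba_gt0); have := mulr_ge0 l3_ge0 (ltW hba_gt0).
  split; nra.
case=> y_ge0 y_le_h ya_le yb_ge.
exists (1 - y / h), ((y * b - x * h) / (h * (b - a))),
       ((x * h - y * a) / (h * (b - a))).
have nz : (b - a != 0) && (h != 0) by rewrite subr_eq0 !gt_eqF.
split; [split|split] => /=.
- by rewrite subr_ge0 ler_pdivrMr // mul1r.
- by rewrite divr_ge0 ?subr_ge0 // ltW.
- by rewrite divr_ge0 ?subr_ge0 // ltW.
- by field.
- by field.
- by field.
Qed.

Lemma canonical_triP (a b : rat) (i : int) : 0 < i -> a < b ->
  canonical_tri a b i <->
  (forall x y : int, 0 < y < i -> ~ (y%:~R * a <= x%:~R * i%:~R <= y%:~R * b)).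
Proof.
move=> i_gt0 ab; have i_gt0' : 0 < i%:~R :> rat by rewrite ltr0z.
split=> [canon x y /andP[y_gt0 y_lt_i] /andP[lo hi] | no_point x y].
  suff y_eq_i : y = i by rewrite y_eq_i ltxx in y_lt_i.
  apply: (canon x) => [|[_ y0]]; last by rewrite y0 ltxx in y_gt0.
  rewrite in_conv3_triangleP //; split=> //; rewrite ?ler0z ?ler_int; exact: ltW.
rewrite in_conv3_triangleP // ler0z ler_int => -[y_ge0 y_le_i lo hi] xy_neq0.
have [y0 | y_neq0] := eqVneq y 0.
  exfalso; apply: xy_neq0; move: lo hi; rewrite y0 mulr0z !mul0r => lo hi.
  have /eqP : x%:~R * i%:~R = 0 :> rat by apply/eqP; rewrite eq_le hi lo.
  by rewrite mulf_eq0 (negbTE (lt0r_neq0 i_gt0')) orbF intr_eq0 => /eqP ->.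
move: y_le_i; rewrite le_eqVlt => /orP[/eqP // | y_lt_i]; exfalso.
apply: (no_point x y); last by rewrite lo hi.
by rewrite y_lt_i andbT lt_neqAle eq_sym y_neq0.
Qed.

Lemma coprimez_inv_mod (k i : int) : 0 < i -> coprimez k i ->
  exists2 y, 0 <= y < i & (i %| y * k + 1)%Z.
Proof.
move=> i_gt0 /eqP kc; case: (Bezoutz k i) => u [v]; rewrite kc => bezout.
have i_neq0 : i != 0 by rewrite gt_eqF.
exists ((- u) %% i)%Z; first by rewrite modz_ge0 // ltz_pmod.
apply/dvdzP; exists (v - (- u %/ i)%Z * k).
have -> : ((- u) %% i)%Z = - u - ((- u) %/ i)%Z * i.
  by rewrite {2}(divz_eq (- u) i); ring.
by rewrite -bezout; ring.
Qed.

Lemma dvdz_mulD1_no_strip_point (m k i x y : int) :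
  0 < m < 3 -> (i %| m * k + 1)%Z -> 0 < y < i ->
  ~~ (0 <= 3 * (x * i - y * k) <= y).
Proof.
move=> /andP[m_gt0 m_lt3] /dvdzP[q mk1] /andP[y_gt0 y_lt_i].
apply/negP => /andP[r_ge0 r_le_y].
have mult_i : y - m * (x * i - y * k) = (y * q - m * x) * i.
  by rewrite mulrBl -mulrA -mk1; ring.
move: mult_i r_ge0 r_le_y; move: (x * i - y * k) (y * q - m * x) => r t mult_i.
have [t_le0 | t_gt0] := lerP t 0; nia.
Qed.

Lemma strip_point_of_not_dvd (k i : int) : 1 < i ->
  ~~ (i %| k + 1)%Z -> ~~ (i %| 2 * k + 1)%Z ->
  exists x y : int, (0 < y < i) && (0 <= 3 * (x * i - y * k) <= y).
Proof.
move=> i_gt1 ndvd1 ndvd2; have i_gt0 : 0 < i by lia.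
have [g_gt1 | g_le1] := ltP 1 (gcdz k i).
  case/dvdzP: (dvdz_gcdl k i) => x kx; case/dvdzP: (dvdz_gcdr k i) => y iy.
  exists x, y; have -> : x * i - y * k = 0 by rewrite kx {1}iy; ring.
  nia.
have cop : coprimez k i.
  have : gcdz k i != 0 by rewrite gcdz_eq0 negb_and orbC gt_eqF.
  have : 0 <= gcdz k i by [].
  rewrite /coprimez; lia.
have [y /andP[y_ge0 y_lt_i] dvd_yk1] := coprimez_inv_mod i_gt0 cop.
case/dvdzP: (dvd_yk1) => x yk1.
exists x, y; have -> : x * i - y * k = 1 by rewrite -yk1; ring.
have [y_ge3 | y_lt3] := lerP 3 y; first by apply/andP; split; lia.
have : y = 0 \/ y = 1 \/ y = 2 by lia.
case=> [y0 | [y1 | y2]].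
- rewrite y0 mul0r add0r in yk1; have [x_le0 | x_gt0] := lerP x 0; nia.
- by move: dvd_yk1; rewrite y1 mul1r (negbTE ndvd1).
- by move: dvd_yk1; rewrite y2 (negbTE ndvd2).
Qed.

Lemma odd_half_residueP (k i : int) :
  (modz i 2 = 1 /\ modz k i = modz (divz (i - 1) 2) i) <-> (i %| 2 * k + 1)%Z.
Proof.
split=> [[i_odd /eqP] | /dvdzP[q kq]].
  have iE := divz_eq i 2; rewrite i_odd in iE; set j := (i %/ 2)%Z in iE *.
  have -> : ((i - 1) %/ 2)%Z = j by rewrite iE addrK mulzK.
  rewrite eqz_mod_dvd => /dvdzP[c kj]; apply/dvdzP; exists (2 * c + 1).
  nia.
have iE := divz_eq i 2; set j := (i %/ 2)%Z in iE.
have i_odd : (i %% 2)%Z = 1.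
  have := @modz_ge0 i 2 isT; have := @ltz_pmod i 2 isT.
  have [i_even | //] : (i %% 2)%Z = 0 \/ (i %% 2)%Z = 1 by lia.
  rewrite i_even addr0 in iE; rewrite iE mulrA in kq; lia.
split=> //; rewrite i_odd in iE.
have -> : ((i - 1) %/ 2)%Z = j by rewrite iE addrK mulzK.
(* 2 (k - j) = (q - 1) i and 2 (j + 1) - i = 1 *)
apply/eqP; rewrite eqz_mod_dvd; apply/dvdzP; exists ((q - 1) * (j + 1) - (k - j)).
nia.
Qed.

Lemma third_strip_ratE (k i x y : int) :
  (y%:~R * k%:~R <= (x%:~R * i%:~R : rat) <= y%:~R * (k%:~R + 3%:R^-1))
  = (0 <= 3 * (x * i - y * k) <= y).
Proof.
have -> : (y%:~R * k%:~R <= (x%:~R * i%:~R : rat) <= y%:~R * (k%:~R + 3%:R^-1))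
    = ((0 : rat) <= 3 * (x%:~R * i%:~R - y%:~R * k%:~R) <= (y%:~R : rat)).
  by apply/andP/andP => -[lo hi]; split; lra.
by rewrite -[3 : rat]/(3%:~R) -!intrM -intrB -intrM ler0z ler_int.
Qed.

Theorem mainTheorem10 (k i : int) (hi : 1 < i) :
  canonical_tri (k%:~R) (k%:~R + 3%:R^-1) i <->
  ((i %| k + 1)%Z \/ (modz i 2 = 1 /\ modz k i = modz (divz (i - 1) 2) i)).
Proof.
have i_gt0 : 0 < i by lia.
have k_lt_third : k%:~R < k%:~R + 3%:R^-1 :> rat by rewrite ltrDl.
rewrite canonical_triP // odd_half_residueP.
split=> [no_point | dvd x y y_bd].
  have [dvd1 | ndvd1] := boolP (i %| k + 1)%Z; first by left.
  have [dvd2 | ndvd2] := boolP (i %| 2 * k + 1)%Z; first by right.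
  have [x [y /andP[y_bd strip]]] := strip_point_of_not_dvd hi ndvd1 ndvd2.
  by case: (no_point x y y_bd); rewrite third_strip_ratE.
rewrite third_strip_ratE; apply/negP.
case: dvd => [dvd1 | dvd2].
- by apply: (@dvdz_mulD1_no_strip_point 1) => //; rewrite mul1r.
- exact: (@dvdz_mulD1_no_strip_point 2).
Qed.
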